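(* Let $H$ and $V$ be endofunctors on $\mathcal A$ such that $H+V$ is iteratable, let $a:HA\to A$ be a completely iterative algebra for $H$, and let $e:V\to T^{H+V}$ be a guarded recursive program scheme with (unique) interpreted solution $e^\ddagger_A:VA\to A$ in $(A,a)$. Then the algebra $[a,e^\ddagger_A]:(H+V)A\to A$ is a completely iterative algebra for $H+V$.
   Context: $\mathcal A$ is a category with binary coproducts. For an endofunctor $G$, a flat equation morphism in an object $A$ is a morphism $e:X\to GX+A$; a $G$-algebra $a:GA\to A$ is a completely iterative algebra (cia) if every flat equation morphism $e:X\to GX+A$ has a unique solution, i.e. a unique $e^\dagger:X\to A$ with $e^\dagger=[a,\mathrm{id}_A]\cdot(Ge^\dagger+\mathrm{id}_A)\cdot e$. An endofunctor $G$ is iteratable if for each object $X$ a terminal coalgebra $T^GX$ for $G(-)+X$ exists; the inverse of its structure is written $[\tau^G_X,\eta^G_X]:GT^GX+X\to T^GX$. Then $T^G$ is a monad with unit $\eta^G$ and multiplication $\mu^G$, $(T^GX,\tau^G_X)$ is the free cia for $G$ on $X$, and $\kappa^G=\tau^G\cdot G\eta^G:G\to T^G$. A recursive program scheme (rps) is a natural transformation $e:V\to T^{H+V}$; it is guarded if $e=\tau^{H+V}\cdot(\mathrm{inl}\,T^{H+V})\cdot f$ for some natural transformation $f:V\to HT^{H+V}$, where $\mathrm{inl}:H\to H+V$ is the coproduct injection. Given a cia $(A,a)$ for $H$, an interpreted solution of $e$ in $A$ is a $V$-algebra $e^\ddagger_A:VA\to A$ for which there is an Eilenberg–Moore algebra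 $\beta:T^{H+V}A\to A$ for the monad $T^{H+V}$ with $\beta\cdot\kappa^{H+V}_A=[a,e^\ddagger_A]$ and $e^\ddagger_A=\beta\cdot e_A$. (Every guarded rps has a unique interpreted solution in every cia.) *)

From Stdlib Require Import Setoid.

Record Cat := {
  ob :> Type;
  hom : ob -> ob -> Type;
  idm : forall A, hom A A;
  cmp : forall A B D, hom B D -> hom A B -> hom A D;
  cmp_id_l : forall A B (f : hom A B), cmp A B B (idm B) f = f;
  cmp_id_r : forall A B (f : hom A B), cmp A A B f (idm A) = f;
  cmp_assoc : forall A B D E (h : hom D E) (g : hom B D) (f : hom A B),
      cmp A D E h (cmp A B D g f) = cmp A B E (cmp B D E h g) f
}.
Arguments hom {c} _ _.
Arguments idm {c} _.
Arguments cmp {c A B D} _ _.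
Notation "g ∘ f" := (cmp g f) (at level 40, left associativity).

Record Coproducts (C : Cat) := {
  cop : ob C -> ob C -> ob C;
  inl_ : forall A B, hom A (cop A B);
  inr_ : forall A B, hom B (cop A B);
  copair : forall A B D, hom A D -> hom B D -> hom (cop A B) D;
  copair_inl : forall (A B D : ob C) (f : hom A D) (g : hom B D), copair A B D f g ∘ inl_ A B = f;
  copair_inr : forall (A B D : ob C) (f : hom A D) (g : hom B D), copair A B D f g ∘ inr_ A B = g;
  copair_uniq : forall (A B D : ob C) (f : hom A D) (g : hom B D) (h : hom (cop A B) D),
      h ∘ inl_ A B = f -> h ∘ inr_ A B = g -> h = copair A B D f g
}.
Arguments cop {C} _ _ _.
Arguments inl_ {C} _ {A B}.
Arguments inr_ {C} _ {A B}.
Arguments copair {C} _ {A B D} _ _.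

Record Functor (C : Cat) := {
  fobj : ob C -> ob C;
  fmap : forall A B, hom A B -> hom (fobj A) (fobj B);
  fmap_id : forall A, fmap A A (idm A) = idm (fobj A);
  fmap_comp : forall (A B D : ob C) (g : hom B D) (f : hom A B),
      fmap A D (g ∘ f) = fmap B D g ∘ fmap A B f
}.
Arguments fobj {C} _ _.
Arguments fmap {C} _ {A B} _.

Section Defs.
Context {C : Cat} (K : Coproducts C).

Definition summap {A B A' B'} (f : hom A A') (g : hom B B')
  : hom (cop K A B) (cop K A' B') :=
  copair K (inl_ K ∘ f) (inr_ K ∘ g).

Lemma summap_id A B : summap (idm A) (idm B) = idm (cop K A B).
Proof.
  symmetry. unfold summap. apply copair_uniq;
  rewrite cmp_id_l; symmetry; apply cmp_id_r.
Qed.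

Lemma summap_comp A B A' B' A'' B'' (f : hom A A') (g : hom B B')
  (f' : hom A' A'') (g' : hom B' B'') :
  summap (f' ∘ f) (g' ∘ g) = summap f' g' ∘ summap f g.
Proof.
  symmetry. unfold summap. apply copair_uniq.
  - rewrite <- cmp_assoc, copair_inl, cmp_assoc, copair_inl, cmp_assoc. reflexivity.
  - rewrite <- cmp_assoc, copair_inr, cmp_assoc, copair_inr, cmp_assoc. reflexivity.
Qed.

Definition FSum (H V : Functor C) : Functor C := {|
  fobj := fun X => cop K (fobj H X) (fobj V X);
  fmap := fun A B f => summap (fmap H f) (fmap V f);
  fmap_id := fun A => eq_trans
     (f_equal2 summap (@fmap_id _ H A) (@fmap_id _ V A)) (summap_id _ _);
  fmap_comp := fun A B D g f => eq_trans
     (f_equal2 summap (@fmap_comp _ H _ _ _ g f) (@fmap_comp _ V _ _ _ g f))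
     (summap_comp _ _ _ _ _ _ _ _ _ _)
|}.

(* G is iteratable: for every X a (chosen) terminal coalgebra
   (T X, out_X : T X -> G (T X) + X) for G(-) + X, given by its unique
   coalgebra-morphism operation [unfold]. *)
Record Iteratable (G : Functor C) := {
  TT : ob C -> ob C;
  out : forall X, hom (TT X) (cop K (fobj G (TT X)) X);
  unfold : forall X Y, hom Y (cop K (fobj G Y) X) -> hom Y (TT X);
  unfold_eq : forall (X Y : ob C) (c : hom Y (cop K (fobj G Y) X)),
      out X ∘ unfold X Y c = summap (fmap G (unfold X Y c)) (idm X) ∘ c;
  unfold_uniq : forall (X Y : ob C) (c : hom Y (cop K (fobj G Y) X)) (h : hom Y (TT X)),
      out X ∘ h = summap (fmap G h) (idm X) ∘ c -> h = unfold X Y c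
}.
Arguments TT {G} _ _.
Arguments out {G} _ _.
Arguments unfold {G} _ {X Y} _.

Section Monad.
Context {G : Functor C} (I : Iteratable G).

(* the inverse [tau_X, eta_X] of out_X (Lambek), defined by coinduction *)
Definition outinv X : hom (cop K (fobj G (TT I X)) X) (TT I X) :=
  unfold I (summap (fmap G (out I X)) (idm X)).
Definition tau X : hom (fobj G (TT I X)) (TT I X) := outinv X ∘ inl_ K.
Definition eta X : hom X (TT I X) := outinv X ∘ inr_ K.

Definition Tmap {X Y} (f : hom X Y) : hom (TT I X) (TT I Y) :=
  unfold I (summap (idm (fobj G (TT I X))) f ∘ out I X).

(* multiplication mu_X : T T X -> T X, by the standard corecursive
   definition on the coalgebra T T X + T X *)
Definition mu_c2 X : hom (TT I X) (cop K (fobj G (cop K (TT I (TT I X)) (TT I X))) X) :=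
  summap (fmap G (inr_ K)) (idm X) ∘ out I X.
Definition mu_c1 X : hom (TT I (TT I X)) (cop K (fobj G (cop K (TT I (TT I X)) (TT I X))) X) :=
  copair K (inl_ K ∘ fmap G (inl_ K)) (mu_c2 X) ∘ out I (TT I X).
Definition mu X : hom (TT I (TT I X)) (TT I X) :=
  unfold I (copair K (mu_c1 X) (mu_c2 X)) ∘ inl_ K.

Definition kappa X : hom (fobj G X) (TT I X) := tau X ∘ fmap G (eta X).

Definition is_EM_alg A (b : hom (TT I A) A) : Prop :=
  b ∘ eta A = idm A /\ b ∘ mu A = b ∘ Tmap b.

End Monad.

Definition is_cia (G : Functor C) (A : ob C) (a : hom (fobj G A) A) : Prop :=
  forall X (e : hom X (cop K (fobj G X) A)),
    exists! s : hom X A, s = copair K a (idm A) ∘ summap (fmap G s) (idm A) ∘ e.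

Section Rps.
Context (H V : Functor C) (I : Iteratable (FSum H V)).

Definition rps_natural (e : forall X, hom (fobj V X) (TT I X)) : Prop :=
  forall X Y (f : hom X Y), e Y ∘ fmap V f = Tmap I f ∘ e X.

Definition guarded (e : forall X, hom (fobj V X) (TT I X)) : Prop :=
  exists f : forall X, hom (fobj V X) (fobj H (TT I X)),
    (forall X Y (g : hom X Y), f Y ∘ fmap V g = fmap H (Tmap I g) ∘ f X) /\
    (forall X, e X = tau I X ∘ inl_ K ∘ f X).

Definition interpreted_solution (A : ob C) (a : hom (fobj H A) A)
  (e : forall X, hom (fobj V X) (TT I X)) (s : hom (fobj V A) A) : Prop :=
  exists b : hom (TT I A) A,
    is_EM_alg I A b /\ b ∘ kappa I A = copair K a s /\ s = b ∘ e A.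

End Rps.
End Defs.

Arguments TT {C K G} _ _.
Arguments out {C K G} _ _.
Arguments unfold {C K G} _ {X Y} _.

(* Let T be the free-cia monad of H + V, (A, a) a cia for H, and b : T A -> A
   the Eilenberg-Moore algebra witnessing that s : V A -> A interprets the
   guarded scheme e = tau ∘ inl ∘ phi, so that b ∘ kappa_A = [a, s].
   - Existence holds for any Eilenberg-Moore algebra b of T: evaluating by b the
     unfolding of a flat equation f into the terminal coalgebra T A solves f in
     the (H + V)-algebra b ∘ kappa_A (lemma EM_solution).
   - Uniqueness uses guardedness: a solution g of f extends to the T-algebra
     morphism ext g = b ∘ T g, which solves a flat H-equation on T X built from
     f and the guard phi alone (ext_solves_guarded_equation); since (A, a) is a
     cia this determines ext g, hence g = ext g ∘ eta. *)

Section CoproductCalculus.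
Context {C : Cat} (K : Coproducts C).

Lemma cmp_copair {A B D E} (f : hom A D) (g : hom B D) (h : hom D E) :
  h ∘ copair K f g = copair K (h ∘ f) (h ∘ g).
Proof.
  apply copair_uniq.
  - rewrite <- cmp_assoc, copair_inl; reflexivity.
  - rewrite <- cmp_assoc, copair_inr; reflexivity.
Qed.

Lemma copair_inl_r {A B D Z} (f : hom A D) (g : hom B D) (r : hom Z A) :
  copair K f g ∘ (inl_ K ∘ r) = f ∘ r.
Proof. rewrite cmp_assoc, copair_inl; reflexivity. Qed.

Lemma summap_inl {A B A' B'} (f : hom A A') (g : hom B B') :
  summap K f g ∘ inl_ K = inl_ K ∘ f.
Proof. apply copair_inl. Qed.

Lemma summap_inr {A B A' B'} (f : hom A A') (g : hom B B') :
  summap K f g ∘ inr_ K = inr_ K ∘ g.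
Proof. apply copair_inr. Qed.

Lemma copair_summap {A B A' B' D} (f : hom A A') (g : hom B B')
  (p : hom A' D) (q : hom B' D) :
  copair K p q ∘ summap K f g = copair K (p ∘ f) (q ∘ g).
Proof.
  unfold summap. rewrite cmp_copair, !cmp_assoc, copair_inl, copair_inr.
  reflexivity.
Qed.

Definition is_solution (G : Functor C) {A X} (alg : hom (fobj G A) A)
  (f : hom X (cop K (fobj G X) A)) (g : hom X A) : Prop :=
  g = copair K alg (idm A) ∘ summap K (fmap G g) (idm A) ∘ f.

End CoproductCalculus.

Section TerminalCoalgebra.
Context {C : Cat} (K : Coproducts C) {G : Functor C} (I : Iteratable K G).

Lemma coalg_hom_unique {X Y} (c : hom Y (cop K (fobj G Y) X)) (h1 h2 : hom Y (TT I X)) :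
  out I X ∘ h1 = summap K (fmap G h1) (idm X) ∘ c ->
  out I X ∘ h2 = summap K (fmap G h2) (idm X) ∘ c -> h1 = h2.
Proof.
  intros E1 E2.
  rewrite (unfold_uniq _ _ _ _ _ _ _ E1), (unfold_uniq _ _ _ _ _ _ _ E2).
  reflexivity.
Qed.

Lemma outinv_out X : outinv K I X ∘ out I X = idm (TT I X).
Proof.
  apply (coalg_hom_unique (out I X)).
  - unfold outinv.
    rewrite cmp_assoc, unfold_eq, <- summap_comp, <- fmap_comp, cmp_id_l.
    reflexivity.
  - rewrite cmp_id_r, fmap_id, summap_id, cmp_id_l. reflexivity.
Qed.

Lemma out_outinv X : out I X ∘ outinv K I X = idm _.
Proof.
  unfold outinv at 1. rewrite unfold_eq. fold (outinv K I X).
  rewrite <- summap_comp, <- fmap_comp, outinv_out, fmap_id, cmp_id_l, summap_id.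
  reflexivity.
Qed.

Lemma outinv_copair X : outinv K I X = copair K (tau K I X) (eta K I X).
Proof. apply copair_uniq; reflexivity. Qed.

Lemma out_mono {X Y} (f g : hom Y (TT I X)) : out I X ∘ f = out I X ∘ g -> f = g.
Proof.
  intro E.
  rewrite <- (cmp_id_l _ _ _ f), <- (cmp_id_l _ _ _ g), <- outinv_out, <- !cmp_assoc, E.
  reflexivity.
Qed.

Lemma out_tau X : out I X ∘ tau K I X = inl_ K.
Proof. unfold tau. rewrite cmp_assoc, out_outinv, cmp_id_l. reflexivity. Qed.

Lemma out_eta X : out I X ∘ eta K I X = inr_ K.
Proof. unfold eta. rewrite cmp_assoc, out_outinv, cmp_id_l. reflexivity. Qed.

Lemma out_Tmap {X Y} (f : hom X Y) :
  out I Y ∘ Tmap K I f = summap K (fmap G (Tmap K I f)) f ∘ out I X.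
Proof.
  unfold Tmap at 1. rewrite unfold_eq. fold (Tmap K I f).
  rewrite cmp_assoc, <- summap_comp, cmp_id_l, cmp_id_r. reflexivity.
Qed.

Lemma Tmap_eta {X Y} (f : hom X Y) : Tmap K I f ∘ eta K I X = eta K I Y ∘ f.
Proof.
  apply out_mono.
  rewrite cmp_assoc, out_Tmap, <- cmp_assoc, out_eta, cmp_assoc, out_eta, summap_inr.
  reflexivity.
Qed.

Lemma Tmap_tau {X Y} (f : hom X Y) :
  Tmap K I f ∘ tau K I X = tau K I Y ∘ fmap G (Tmap K I f).
Proof.
  apply out_mono.
  rewrite cmp_assoc, out_Tmap, <- cmp_assoc, out_tau, cmp_assoc, out_tau, summap_inl.
  reflexivity.
Qed.

Lemma Tmap_comp {X Y Z} (f : hom X Y) (g : hom Y Z) :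
  Tmap K I (g ∘ f) = Tmap K I g ∘ Tmap K I f.
Proof.
  apply (coalg_hom_unique (summap K (idm _) (g ∘ f) ∘ out I X)).
  - rewrite out_Tmap, cmp_assoc, <- summap_comp, cmp_id_l, cmp_id_r. reflexivity.
  - rewrite cmp_assoc, out_Tmap, <- cmp_assoc, out_Tmap, cmp_assoc, <- summap_comp.
    rewrite cmp_assoc, <- summap_comp, <- fmap_comp, cmp_id_l, cmp_id_r. reflexivity.
Qed.

Definition mu_unfold X : hom (cop K (TT I (TT I X)) (TT I X)) (TT I X) :=
  unfold I (copair K (mu_c1 K I X) (mu_c2 K I X)).

Lemma out_mu_unfold X :
  out I X ∘ mu_unfold X
  = summap K (fmap G (mu_unfold X)) (idm X) ∘ copair K (mu_c1 K I X) (mu_c2 K I X).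
Proof. apply unfold_eq. Qed.

(* On T X the coalgebra mu_c2 is (a copy of) out, so mu_unfold is the identity there. *)
Lemma mu_unfold_inr X : mu_unfold X ∘ inr_ K = idm _.
Proof.
  apply (coalg_hom_unique (out I X)).
  - rewrite cmp_assoc, out_mu_unfold, <- cmp_assoc, copair_inr. unfold mu_c2.
    rewrite cmp_assoc, <- summap_comp, <- fmap_comp, cmp_id_l. reflexivity.
  - rewrite cmp_id_r, fmap_id, summap_id, cmp_id_l. reflexivity.
Qed.

Lemma out_mu X :
  out I X ∘ mu K I X
  = summap K (fmap G (mu_unfold X)) (idm X) ∘ mu_c1 K I X.
Proof.
  unfold mu. fold (mu_unfold X).
  rewrite cmp_assoc, out_mu_unfold, <- cmp_assoc, copair_inl. reflexivity.
Qed.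

Lemma mu_eta X : mu K I X ∘ eta K I (TT I X) = idm _.
Proof.
  apply out_mono.
  rewrite cmp_assoc, out_mu. unfold mu_c1.
  rewrite <- !cmp_assoc, out_eta, copair_inr, cmp_id_r.
  rewrite <- (cmp_id_r _ _ _ (out I X)), <- (mu_unfold_inr X), cmp_assoc,
    out_mu_unfold, <- cmp_assoc, copair_inr.
  reflexivity.
Qed.

Lemma mu_tau X : mu K I X ∘ tau K I (TT I X) = tau K I X ∘ fmap G (mu K I X).
Proof.
  apply out_mono.
  rewrite cmp_assoc, out_mu. unfold mu_c1.
  rewrite <- !cmp_assoc, out_tau, copair_inl, cmp_assoc, summap_inl, <- cmp_assoc,
    <- fmap_comp, cmp_assoc, out_tau.
  reflexivity.
Qed.

Lemma mu_c2_nat {X Y} (g : hom X Y) :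
  mu_c2 K I Y ∘ Tmap K I g
  = summap K (fmap G (summap K (Tmap K I (Tmap K I g)) (Tmap K I g))) g ∘ mu_c2 K I X.
Proof.
  unfold mu_c2.
  rewrite <- cmp_assoc, out_Tmap, !cmp_assoc, <- !summap_comp, <- !fmap_comp, summap_inr.
  rewrite !cmp_id_l, cmp_id_r. reflexivity.
Qed.

Lemma mu_coalg_nat {X Y} (g : hom X Y) :
  copair K (mu_c1 K I Y) (mu_c2 K I Y) ∘ summap K (Tmap K I (Tmap K I g)) (Tmap K I g)
  = summap K (fmap G (summap K (Tmap K I (Tmap K I g)) (Tmap K I g))) g
    ∘ copair K (mu_c1 K I X) (mu_c2 K I X).
Proof.
  rewrite copair_summap, cmp_copair. f_equal.
  - unfold mu_c1.
    rewrite <- cmp_assoc, out_Tmap, cmp_assoc, copair_summap, cmp_assoc, cmp_copair.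
    f_equal. f_equal.
    + rewrite cmp_assoc, summap_inl, <- !cmp_assoc, <- !fmap_comp, summap_inl.
      reflexivity.
    + apply mu_c2_nat.
  - apply mu_c2_nat.
Qed.

Lemma mu_unfold_nat {X Y} (g : hom X Y) :
  mu_unfold Y ∘ summap K (Tmap K I (Tmap K I g)) (Tmap K I g) = Tmap K I g ∘ mu_unfold X.
Proof.
  apply (coalg_hom_unique (summap K (idm _) g ∘ copair K (mu_c1 K I X) (mu_c2 K I X))).
  - rewrite cmp_assoc, out_mu_unfold, <- cmp_assoc, mu_coalg_nat, cmp_assoc,
      <- summap_comp, <- fmap_comp, cmp_assoc, <- summap_comp.
    rewrite !cmp_id_l, !cmp_id_r. reflexivity.
  - rewrite cmp_assoc, out_Tmap, <- cmp_assoc, out_mu_unfold, cmp_assoc,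
      <- summap_comp, <- fmap_comp, cmp_assoc, <- summap_comp.
    rewrite !cmp_id_l, !cmp_id_r. reflexivity.
Qed.

Lemma mu_nat {X Y} (g : hom X Y) :
  mu K I Y ∘ Tmap K I (Tmap K I g) = Tmap K I g ∘ mu K I X.
Proof.
  unfold mu. fold (mu_unfold X) (mu_unfold Y).
  rewrite <- cmp_assoc, <- (summap_inl K (Tmap K I (Tmap K I g)) (Tmap K I g)),
    cmp_assoc, mu_unfold_nat, cmp_assoc.
  reflexivity.
Qed.
End TerminalCoalgebra.

Section EilenbergMooreAlgebras.
Context {C : Cat} (K : Coproducts C) {G : Functor C} (I : Iteratable K G).
Context (A : ob C) (b : hom (TT I A) A).
Hypothesis b_unit : b ∘ eta K I A = idm A.
Hypothesis b_mult : b ∘ mu K I A = b ∘ Tmap K I b.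

(* An Eilenberg-Moore algebra b is a G-algebra via b ∘ tau, and this G-algebra
   is b ∘ kappa_A ∘ G b, since tau = mu ∘ tau_T ∘ G eta_T. *)
Lemma EM_tau : b ∘ tau K I A = b ∘ kappa K I A ∘ fmap G b.
Proof.
  rewrite <- (cmp_id_r _ _ _ (tau K I A)), <- fmap_id, <- (mu_eta K I A), fmap_comp,
    (cmp_assoc _ _ _ _ _ (tau K I A)), <- mu_tau, !cmp_assoc, b_mult,
    <- (cmp_assoc _ _ _ _ _ b (Tmap K I b)), Tmap_tau.
  rewrite <- !cmp_assoc, <- !fmap_comp, Tmap_eta.
  unfold kappa. rewrite fmap_comp, <- !cmp_assoc. reflexivity.
Qed.

(* The T-algebra morphism T Y -> A freely extending h : Y -> A. *)
Definition ext {Y} (h : hom Y A) : hom (TT I Y) A := b ∘ Tmap K I h.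

Lemma ext_eta {Y} (h : hom Y A) : ext h ∘ eta K I Y = h.
Proof.
  unfold ext. rewrite <- cmp_assoc, Tmap_eta, cmp_assoc, b_unit, cmp_id_l. reflexivity.
Qed.

Lemma ext_tau {Y} (h : hom Y A) :
  ext h ∘ tau K I Y = b ∘ kappa K I A ∘ fmap G (ext h).
Proof.
  unfold ext. rewrite <- cmp_assoc, Tmap_tau, cmp_assoc, EM_tau, fmap_comp, !cmp_assoc.
  reflexivity.
Qed.

Lemma ext_ext {Y} (h : hom Y A) : ext (ext h) = ext h ∘ mu K I Y.
Proof.
  unfold ext. rewrite Tmap_comp, cmp_assoc, <- b_mult, <- !cmp_assoc, mu_nat.
  reflexivity.
Qed.

Lemma EM_solution {X} (f : hom X (cop K (fobj G X) A)) :
  is_solution K G (b ∘ kappa K I A) f (b ∘ unfold I f).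
Proof.
  unfold is_solution.
  rewrite <- (cmp_id_l _ _ _ (unfold I f)) at 1.
  rewrite <- (outinv_out K I A), <- cmp_assoc, unfold_eq, outinv_copair, !cmp_assoc,
    cmp_copair, EM_tau, b_unit, !copair_summap, fmap_comp, cmp_assoc.
  reflexivity.
Qed.
End EilenbergMooreAlgebras.

Section GuardedSchemes.
Context {C : Cat} (K : Coproducts C) (H V : Functor C) (I : Iteratable K (FSum K H V)).
Context (A : ob C) (a : hom (fobj H A) A) (s : hom (fobj V A) A).
Context (e : forall X, hom (fobj V X) (TT I X)) (phi : forall X, hom (fobj V X) (fobj H (TT I X))).
Hypothesis e_natural : rps_natural K H V I e.
Hypothesis e_guarded : forall X, e X = tau K I X ∘ inl_ K ∘ phi X.
Context (b : hom (TT I A) A).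
Hypothesis b_unit : b ∘ eta K I A = idm A.
Hypothesis b_mult : b ∘ mu K I A = b ∘ Tmap K I b.
Hypothesis b_kappa : b ∘ kappa K I A = copair K a s.
Hypothesis s_def : s = b ∘ e A.

Notation ext := (ext K I A b).

Lemma solution_guarded {Y} (h : hom Y A) :
  s ∘ fmap V h = a ∘ fmap H (ext h) ∘ phi Y.
Proof.
  rewrite s_def, <- cmp_assoc, e_natural, e_guarded, !cmp_assoc.
  change (b ∘ Tmap K I h) with (ext h).
  rewrite (ext_tau _ _ _ _ b_mult), b_kappa. cbn [fobj fmap FSum].
  rewrite copair_summap, copair_inl.
  reflexivity.
Qed.

(* A flat (H + V)-equation f : X -> (H + V) X + A induces a flat H-equation on
   T X: an H-node of a term is kept, a V-node v(t) is replaced by the H-node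
   phi(v(t)) with its subterms flattened by mu, and a variable x is unfolded
   one step along f, again replacing V-nodes by their guards. *)
Definition guarded_step X : hom (fobj (FSum K H V) (TT I X)) (cop K (fobj H (TT I X)) A) :=
  copair K (inl_ K) (inl_ K ∘ fmap H (mu K I X) ∘ phi (TT I X)).

Definition guarded_lift X : hom (cop K (fobj (FSum K H V) X) A) (cop K (fobj H (TT I X)) A) :=
  copair K (copair K (inl_ K ∘ fmap H (eta K I X)) (inl_ K ∘ phi X)) (inr_ K).

Definition guarded_equation {X} (f : hom X (cop K (fobj (FSum K H V) X) A)) :
  hom (TT I X) (cop K (fobj H (TT I X)) A) :=
  copair K (guarded_step X) (guarded_lift X ∘ f) ∘ out I X.

Lemma ext_solves_guarded_equation {X} (f : hom X (cop K (fobj (FSum K H V) X) A))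
  (g : hom X A) :
  is_solution K (FSum K H V) (copair K a s) f g ->
  is_solution K H a (guarded_equation f) (ext g).
Proof.
  unfold is_solution, guarded_equation. intro g_solves.
  assert (on_terms : ext g ∘ tau K I X
          = copair K a (idm A) ∘ summap K (fmap H (ext g)) (idm A) ∘ guarded_step X).
  { rewrite (ext_tau _ _ _ _ b_mult), b_kappa. unfold guarded_step. cbn [fobj fmap FSum].
    rewrite !copair_summap, cmp_copair, copair_inl.
    f_equal.
    rewrite solution_guarded, (ext_ext _ _ _ _ b_mult), fmap_comp, !cmp_assoc, copair_inl.
    reflexivity. }
  assert (on_variables :
            copair K (copair K a s) (idm A) ∘ summap K (fmap (FSum K H V) g) (idm A)
            = copair K a (idm A) ∘ summap K (fmap H (ext g)) (idm A) ∘ guarded_lift X).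
  { unfold guarded_lift. cbn [fobj fmap FSum].
    rewrite !copair_summap, !cmp_copair, copair_inl_r, copair_inl_r, copair_inr.
    f_equal. f_equal.
    - rewrite <- cmp_assoc, <- fmap_comp, (ext_eta _ _ _ _ b_unit). reflexivity.
    - apply solution_guarded. }
  transitivity (ext g ∘ outinv K I X ∘ out I X).
  { rewrite <- cmp_assoc, outinv_out, cmp_id_r. reflexivity. }
  rewrite outinv_copair, cmp_copair, (ext_eta _ _ _ _ b_unit), on_terms.
  rewrite cmp_assoc, cmp_copair, (cmp_assoc _ _ _ _ _ _ (guarded_lift X) f),
    <- on_variables.
  f_equal. f_equal. exact g_solves.
Qed.

(* Uniqueness: if (A, a) is a cia for H, any two solutions g of f agree, since
   both are ext g ∘ eta for the unique solution ext g of the induced H-equation. *)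
Lemma guarded_solution_unique (a_cia : is_cia K H A a) {X}
  (f : hom X (cop K (fobj (FSum K H V) X) A)) (g1 g2 : hom X A) :
  is_solution K (FSum K H V) (copair K a s) f g1 ->
  is_solution K (FSum K H V) (copair K a s) f g2 -> g1 = g2.
Proof.
  intros S1 S2.
  destruct (a_cia (TT I X) (guarded_equation f)) as [k [_ k_unique]].
  rewrite <- (ext_eta _ _ _ _ b_unit g1), <- (ext_eta _ _ _ _ b_unit g2),
    <- (k_unique _ (ext_solves_guarded_equation f g1 S1)),
    <- (k_unique _ (ext_solves_guarded_equation f g2 S2)).
  reflexivity.
Qed.
End GuardedSchemes.

(* The cia property for [a, s]: solutions exist by EM_solution and are unique
   by guarded_solution_unique (only the factorisation e = tau ∘ inl ∘ phi of the
   guardedness witness is needed, not the naturality of phi). *)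
Theorem mainTheorem4 (C : Cat) (K : Coproducts C) (H V : Functor C)
  (I : Iteratable K (FSum K H V)) (A : ob C) (a : hom (fobj H A) A)
  (e : forall X, hom (fobj V X) (TT I X)) (s : hom (fobj V A) A) :
  is_cia K H A a ->
  rps_natural K H V I e ->
  guarded K H V I e ->
  interpreted_solution K H V I A a e s ->
  is_cia K (FSum K H V) A (copair K a s).
Proof.
  intros a_cia e_natural [phi [_ e_guarded]] [b [[b_unit b_mult] [b_kappa s_def]]] X f.
  assert (unfold_solves : is_solution K (FSum K H V) (copair K a s) f (b ∘ unfold I f)).
  { rewrite <- b_kappa. exact (EM_solution K I A b b_unit b_mult f). }
  exists (b ∘ unfold I f). split.
  - exact unfold_solves.
  - intros g g_solves.
    exact (guarded_solution_unique K H V I A a s e phi e_natural e_guarded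
             b b_unit b_mult b_kappa s_def a_cia f _ _ unfold_solves g_solves).
Qed.
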